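(* Let $q\colon L\to\mathbb Z$ be an integral quadratic form on a free abelian group $L$ of finite rank, with associated symmetric bilinear form $b$, and let $v\in L$ with $q(v)=\pm2$. Let $q'$ be the $v$-twist of $q$. Then $q$ and $q'$ have the same discriminant group (the cokernel of the correlation homomorphism $L\to L^*$). In particular, $q'$ is non-degenerate (respectively unimodular) if and only if $q$ is non-degenerate (respectively unimodular).
   Context: For $v\in L$ with $q(v)=\pm 2$, let $s_v\colon L\to L$ be the reflection $x\mapsto x-b(x,v)v$ if $q(v)=2$ and $x\mapsto x+b(x,v)v$ if $q(v)=-2$. The $v$-twist of $q$ is the integral quadratic form $q'(x)=b(x,s_vx)$; it is the unique integral quadratic form with $q'(v)=-q(v)$ and $q'(w)=q(w)$ for all $w$ orthogonal to $v$. *)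

(* The lattice L is Z^n = 'rV[int]_n; its dual L^* is
   identified with 'rV[int]_n via the dual basis. *)
From mathcomp Require Import all_boot all_order all_algebra.
Set Implicit Arguments. Unset Strict Implicit. Unset Printing Implicit Defensive.
Import Order.TTheory GRing.Theory Num.Theory.
Local Open Scope ring_scope.

Definition bil (n : nat) (B : 'M[int]_n) (x y : 'rV[int]_n) : int :=
  (x *m B *m y^T) 0 0.

(* Integral quadratic form q(x) = b(x,x) (convention forced by s_v v = -v). *)
Definition qf (n : nat) (B : 'M[int]_n) (x : 'rV[int]_n) : int := bil B x x.

(* Reflection s_v (meaningful when q(v) = 2 or q(v) = -2). *)
Definition refl (n : nat) (B : 'M[int]_n) (v x : 'rV[int]_n) : 'rV[int]_n :=
  if qf B v == 2 then x - bil B x v *: v else x + bil B x v *: v.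

(* Gram matrix of the v-twist: b'(x,y) = b(x, s_v y), so q'(x) = b(x, s_v x). *)
Definition twist (n : nat) (B : 'M[int]_n) (v : 'rV[int]_n) : 'M[int]_n :=
  \matrix_(i, j) bil B (delta_mx 0 i) (refl B v (delta_mx 0 j)).

Definition corr (n : nat) (B : 'M[int]_n) (x : 'rV[int]_n) : 'rV[int]_n :=
  x *m B.

(* Membership in the image of the correlation; the discriminant group is
   L^* / (image of corr). *)
Definition in_corr_image (n : nat) (B : 'M[int]_n) (y : 'rV[int]_n) : Prop :=
  exists x, y = corr B x.

Definition lat_nondegenerate (n : nat) (B : 'M[int]_n) : Prop := injective (corr B).
Definition lat_unimodular (n : nat) (B : 'M[int]_n) : Prop := bijective (corr B).

(** The reflection s_v is self-adjoint for b and, because q(v) = 2 or -2, an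
   involution of L.  Hence b'(x, y) = b(x, s_v y) = b(s_v x, y): the
   correlation of the twist is the correlation of q precomposed with the
   automorphism s_v of L, so both have the same image, and one is injective
   (resp. bijective) exactly when the other is. *)

From mathcomp Require Import all_boot all_order all_algebra.
Import Order.TTheory GRing.Theory Num.Theory.
Local Open Scope ring_scope.

Section CorrPrecomposition.

Variables (n : nat) (B C : 'M[int]_n) (s : 'rV[int]_n -> 'rV[int]_n).
Hypotheses (s_bij : bijective s) (corrC : corr C =1 corr B \o s).

Let corrB : exists2 s', bijective s' & corr B =1 corr C \o s'.
Proof.
case: s_bij => s' sK s'K; exists s'; first by exists s.
by move=> x; rewrite /= corrC /= s'K.
Qed.

Lemma in_corr_image_comp y : in_corr_image B y <-> in_corr_image C y.
Proof.
have [s' _ eqB] := corrB.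
by split=> -[x ->]; [exists (s' x); rewrite eqB | exists (s x); rewrite corrC].
Qed.

Lemma lat_nondegenerate_comp : lat_nondegenerate B <-> lat_nondegenerate C.
Proof.
have [s' s'_bij eqB] := corrB.
split=> inj.
- exact: eq_inj (inj_comp inj (bij_inj s_bij)) (fsym corrC).
- exact: eq_inj (inj_comp inj (bij_inj s'_bij)) (fsym eqB).
Qed.

Lemma lat_unimodular_comp : lat_unimodular B <-> lat_unimodular C.
Proof.
have [s' s'_bij eqB] := corrB.
rewrite /lat_unimodular; split=> bij.
- exact: eq_bij (bij_comp bij s_bij) _ (fsym corrC).
- exact: eq_bij (bij_comp bij s'_bij) _ (fsym eqB).
Qed.

End CorrPrecomposition.

Section Twist.

Variables (n : nat) (B : 'M[int]_n) (v : 'rV[int]_n).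

Definition refl_sign : int := if qf B v == 2 then 1 else -1.

Lemma reflE x : refl B v x = x - (refl_sign * bil B x v) *: v.
Proof.
by rewrite /refl /refl_sign; case: ifP; rewrite ?mul1r // mulN1r scaleNr opprK.
Qed.

Definition refl_mx : 'M[int]_n := 1%:M - refl_sign *: (B *m v^T *m v).

Lemma mul_refl_mx x : x *m refl_mx = refl B v x.
Proof.
rewrite reflE mulmxBr mulmx1 -scalemxAr !mulmxA [x *m B *m v^T]mx11_scalar.
by rewrite mul_scalar_mx scalerA.
Qed.

Lemma twistE : twist B v = B *m refl_mx^T.
Proof.
apply/matrixP => i j; rewrite mxE -mul_refl_mx /bil trmx_mul mulmxA.
by rewrite -(mulmxA _ B) -rowE trmx_delta -colE !mxE.
Qed.

Hypothesis Bsym : B^T = B.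

Lemma refl_mx_adjoint : B *m refl_mx^T = refl_mx *m B.
Proof.
rewrite /refl_mx linearB /= linearZ /= trmx1 !trmx_mul trmxK Bsym.
by rewrite mulmxBr mulmxBl mulmx1 mul1mx -scalemxAr -scalemxAl !mulmxA.
Qed.

Hypothesis qv : qf B v = 2 \/ qf B v = -2.

Lemma refl_sign_qf : refl_sign * qf B v = 2.
Proof. by rewrite /refl_sign; case: qv => ->. Qed.

Lemma refl_mxK : refl_mx *m refl_mx = 1%:M.
Proof.
set M := B *m v^T *m v.
have MM : M *m M = qf B v *: M.
  rewrite /M -!mulmxA [v *m (B *m _)]mulmxA [v *m B *m _]mulmxA.
  by rewrite [v *m B *m v^T]mx11_scalar mul_scalar_mx -!scalemxAr.
rewrite /refl_mx -/M mulmxBl mulmxBr !mul1mx mulmxBr mulmx1 -scalemxAl.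
rewrite -scalemxAr MM !scalerA -mulrA refl_sign_qf mulr_natr -scalerMnl mulr2n.
by rewrite opprB addrK subrK.
Qed.

Lemma reflK : involutive (refl B v).
Proof. by move=> x; rewrite -!mul_refl_mx -mulmxA refl_mxK mulmx1. Qed.

Lemma corr_twist : corr (twist B v) =1 corr B \o refl B v.
Proof.
by move=> x; rewrite /corr /= twistE refl_mx_adjoint mulmxA mul_refl_mx.
Qed.

End Twist.

Theorem lemma2p6 (n : nat) (B : 'M[int]_n) (v : 'rV[int]_n)
  (Bsym : B^T = B) (hv : qf B v = 2 \/ qf B v = -2) :
  (forall y : 'rV[int]_n, in_corr_image B y <-> in_corr_image (twist B v) y) /\
  (lat_nondegenerate B <-> lat_nondegenerate (twist B v)) /\
  (lat_unimodular B <-> lat_unimodular (twist B v)).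
Proof.
have s_bij := inv_bij (@reflK n B v hv).
have corrT := @corr_twist n B v Bsym.
split; [move=> y | split].
- exact: in_corr_image_comp s_bij corrT y.
- exact: lat_nondegenerate_comp s_bij corrT.
- exact: lat_unimodular_comp s_bij corrT.
Qed.
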